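(* In $\varepsilon\tau(\mathbf{C})$, for every derivation $\pi$ and every critical formula $C(e)$ used in $\pi$ with critical term $e$, there is an $e$-elimination set for $\pi$ and $\{C(e)\}$.
   Context: $\mathbf{C}$ is classical propositional logic. $\varepsilon\tau$-terms: $\varepsilon x\,A(x)$, $\tau x\,A(x)$. Critical formulas: $A(t)\to A(\varepsilon x\,A(x))$ (critical term $\varepsilon x\,A(x)$) and $A(\tau x\,A(x))\to A(t)$ (critical term $\tau x\,A(x)$); a critical formula belongs to its critical term. A derivation $\pi$ of $D$ in $\varepsilon\tau(\mathbf{L})$ is a derivation in the quantifier-free language with $\varepsilon\tau$-terms from a finite set of critical formulas using substitution instances of theorems of $\mathbf{L}$ and modus ponens. Suppose the critical formulas of $\pi$ are $\Gamma\cup\Lambda(e)\cup\Lambda'(e)$, where $\Lambda(e)\cup\Lambda'(e)$ are all the critical formulas of $\pi$ belonging to $e$ and $\Gamma$ the rest, and write the end formula as $D(e)$. A set $\{s_1,\dots,s_k\}$ of terms is an $e$-elimination set for $\pi$ and $\Lambda(e)$ if $\Gamma[s_1/e],\dots,\Gamma[s_k/e],\Lambda'(e)\vdash_{\mathbf{L}}D(s_1)\lor\dots\lor D(s_k)$, where $[s/e]$ and $D(s)$ denote replacing every occurrence of $e$ by $s$, and $\vdash_{\mathbf{L}}$ is derivability from the listed assumptions by substitution instances of theorems of $\mathbf{L}$ and modus ponens. *)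

(* Quantifier-free first-order language with epsilon/tau terms,
   in locally nameless representation: free variables are names [Var x],
   bound variables are de Bruijn indices [BVar n]; [Eps A] / [Tau A] bind
   index 0 of the body [A].  Thus [Eps A] is  eps x A(x)  and  [fopen A t]
   is  A(t). *)
From Stdlib Require Import List ClassicalEpsilon.
Import ListNotations.

Inductive term : Type :=
  | Var  : nat -> term
  | BVar : nat -> term
  | Fn   : nat -> list term -> term
  | Eps  : form -> term
  | Tau  : form -> term
with form : Type :=
  | Atom : nat -> list term -> form
  | Bot  : form
  | Imp  : form -> form -> form
  | And  : form -> form -> form
  | Or   : form -> form -> form.

Fixpoint term_lc_at (k : nat) (u : term) : Prop :=
  match u with
  | Var _ => True
  | BVar n => n < k
  | Fn _ args => fold_right (fun a P => term_lc_at k a /\ P) True args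
  | Eps A => form_lc_at (S k) A
  | Tau A => form_lc_at (S k) A
  end
with form_lc_at (k : nat) (A : form) : Prop :=
  match A with
  | Atom _ args => fold_right (fun a P => term_lc_at k a /\ P) True args
  | Bot => True
  | Imp A B | And A B | Or A B => form_lc_at k A /\ form_lc_at k B
  end.

Definition term_lc (u : term) : Prop := term_lc_at 0 u.
Definition form_lc (A : form) : Prop := form_lc_at 0 A.

Fixpoint topen (k : nat) (t : term) (u : term) : term :=
  match u with
  | Var x => Var x
  | BVar n => if Nat.eqb n k then t else BVar n
  | Fn f args => Fn f (map (topen k t) args)
  | Eps A => Eps (fopen_at (S k) t A)
  | Tau A => Tau (fopen_at (S k) t A)
  end
with fopen_at (k : nat) (t : term) (A : form) : form :=
  match A with
  | Atom p args => Atom p (map (topen k t) args)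
  | Bot => Bot
  | Imp A B => Imp (fopen_at k t A) (fopen_at k t B)
  | And A B => And (fopen_at k t A) (fopen_at k t B)
  | Or A B => Or (fopen_at k t A) (fopen_at k t B)
  end.

Definition fopen (A : form) (t : term) : form := fopen_at 0 t A.

Fixpoint replT (s e : term) (u : term) : term :=
  if excluded_middle_informative (u = e) then s else
  match u with
  | Var x => Var x
  | BVar n => BVar n
  | Fn f args => Fn f (map (replT s e) args)
  | Eps A => Eps (replF s e A)
  | Tau A => Tau (replF s e A)
  end
with replF (s e : term) (A : form) : form :=
  match A with
  | Atom p args => Atom p (map (replT s e) args)
  | Bot => Bot
  | Imp A B => Imp (replF s e A) (replF s e B)
  | And A B => And (replF s e A) (replF s e B)
  | Or A B => Or (replF s e A) (replF s e B)
  end.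

Inductive crit : Type :=
  | CritEps : form -> term -> crit
  | CritTau : form -> term -> crit.

Definition critf (c : crit) : form :=
  match c with
  | CritEps A t => Imp (fopen A t) (fopen A (Eps A))
  | CritTau A t => Imp (fopen A (Tau A)) (fopen A t)
  end.

Definition crit_term (c : crit) : term :=
  match c with
  | CritEps A _ => Eps A
  | CritTau A _ => Tau A
  end.

Definition crit_wf (c : crit) : Prop :=
  match c with
  | CritEps A t | CritTau A t => form_lc_at 1 A /\ term_lc t
  end.

Inductive pform : Type :=
  | PVar : nat -> pform
  | PBot : pform
  | PImp : pform -> pform -> pform
  | PAnd : pform -> pform -> pform
  | POr  : pform -> pform -> pform.

Fixpoint peval (v : nat -> bool) (P : pform) : bool :=
  match P with
  | PVar n => v n
  | PBot => false
  | PImp P Q => implb (peval v P) (peval v Q)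
  | PAnd P Q => andb (peval v P) (peval v Q)
  | POr P Q => orb (peval v P) (peval v Q)
  end.

Definition C_logic (P : pform) : Prop := forall v, peval v P = true.

Fixpoint psubst (sg : nat -> form) (P : pform) : form :=
  match P with
  | PVar n => sg n
  | PBot => Bot
  | PImp P Q => Imp (psubst sg P) (psubst sg Q)
  | PAnd P Q => And (psubst sg P) (psubst sg Q)
  | POr P Q => Or (psubst sg P) (psubst sg Q)
  end.

Inductive Deriv (L : pform -> Prop) (Hyp : form -> Prop) : form -> Prop :=
  | d_hyp : forall A, Hyp A -> Deriv L Hyp A
  | d_ax  : forall P sg, L P -> form_lc (psubst sg P) -> Deriv L Hyp (psubst sg P)
  | d_mp  : forall A B, Deriv L Hyp A -> Deriv L Hyp (Imp A B) -> Deriv L Hyp B.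

Definition etDeriv (L : pform -> Prop) (Delta : list crit) (D : form) : Prop :=
  (forall c, In c Delta -> crit_wf c) /\
  Deriv L (fun phi => exists c, In c Delta /\ phi = critf c) D.

Fixpoint big_or (l : list form) : form :=
  match l with
  | [] => Bot
  | [d] => d
  | d :: ds => Or d (big_or ds)
  end.

(** Gamma = critical formulas of Delta not belonging to e,
    Lam' = those belonging to e that are not in Lam. *)
Definition elim_set (L : pform -> Prop) (Delta : list crit) (D : form) (e : term)
    (Lam : form -> Prop) (ss : list term) : Prop :=
  ss <> [] /\ Forall term_lc ss /\
  Deriv L
    (fun phi =>
       (exists s c, In s ss /\ In c Delta /\ crit_term c <> e /\
                    phi = replF s e (critf c))
       \/ (exists c, In c Delta /\ crit_term c = e /\ ~ Lam (critf c) /\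
                     phi = critf c))
    (big_or (map (fun s => replF s e D) ss)).

(* The set {e, t} works, where C(e) is A(t) -> A(e) with e = eps x A(x) (or
   A(e) -> A(t) with e = tau x A(x)).  Take a valuation of the atoms satisfying the
   assumptions of the elimination set.  If it makes C(e) true, it makes every critical
   formula of the derivation true, hence D(e).  Otherwise A(t) is true (resp. false);
   replacing e by t turns every critical formula belonging to e into one with
   consequent (resp. antecedent) A(t), so every critical formula is true after the
   replacement, hence D(t).  Soundness and completeness of C for valuations of the
   atoms turn this case distinction into a derivation of D(e) \/ D(t). *)

From Stdlib Require Import List Arith Lia Bool ClassicalEpsilon.
Import ListNotations.

Section TermFormInduction.

Variables (P : term -> Prop) (Q : form -> Prop).
Hypotheses
  (HVar : forall x, P (Var x))
  (HBVar : forall n, P (BVar n))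
  (HFn : forall f args, Forall P args -> P (Fn f args))
  (HEps : forall A, Q A -> P (Eps A))
  (HTau : forall A, Q A -> P (Tau A))
  (HAtom : forall p args, Forall P args -> Q (Atom p args))
  (HBot : Q Bot)
  (HImp : forall A B, Q A -> Q B -> Q (Imp A B))
  (HAnd : forall A B, Q A -> Q B -> Q (And A B))
  (HOr : forall A B, Q A -> Q B -> Q (Or A B)).

Fixpoint term_nested_ind (u : term) : P u :=
  match u with
  | Var x => HVar x
  | BVar n => HBVar n
  | Fn f args => HFn f args
      ((fix args_ind (l : list term) : Forall P l :=
          match l with
          | [] => Forall_nil P
          | a :: l' => Forall_cons a (term_nested_ind a) (args_ind l')
          end) args)
  | Eps A => HEps A (form_nested_ind A)
  | Tau A => HTau A (form_nested_ind A)
  end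
with form_nested_ind (A : form) : Q A :=
  match A with
  | Atom p args => HAtom p args
      ((fix args_ind (l : list term) : Forall P l :=
          match l with
          | [] => Forall_nil P
          | a :: l' => Forall_cons a (term_nested_ind a) (args_ind l')
          end) args)
  | Bot => HBot
  | Imp A B => HImp A B (form_nested_ind A) (form_nested_ind B)
  | And A B => HAnd A B (form_nested_ind A) (form_nested_ind B)
  | Or A B => HOr A B (form_nested_ind A) (form_nested_ind B)
  end.

Lemma term_form_ind : (forall u, P u) /\ (forall A, Q A).
Proof. exact (conj term_nested_ind form_nested_ind). Qed.

End TermFormInduction.

Fixpoint tsize (u : term) : nat :=
  match u with
  | Var _ | BVar _ => 1
  | Fn _ args => S (list_sum (map tsize args))
  | Eps A | Tau A => S (fsize A)
  end
with fsize (A : form) : nat :=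
  match A with
  | Atom _ args => S (list_sum (map tsize args))
  | Bot => 1
  | Imp A B | And A B | Or A B => S (fsize A + fsize B)
  end.

Lemma tsize_le_args a args : In a args -> tsize a <= list_sum (map tsize args).
Proof.
  induction args as [|b args IH]; simpl; [tauto|].
  intros [<-|Ha]; [lia|specialize (IH Ha); lia].
Qed.

Lemma map_topen_size k s args :
  Forall (fun u => forall k s, topen k s u = u \/ tsize s <= tsize (topen k s u)) args ->
  map (topen k s) args = args \/ tsize s <= list_sum (map tsize (map (topen k s) args)).
Proof.
  induction 1 as [|a args Ha _ IH]; simpl; [now left|].
  destruct (Ha k s) as [Ea|Ea], IH as [E|E]; try (right; lia).
  left; congruence.
Qed.

Lemma open_size :
  (forall u k s, topen k s u = u \/ tsize s <= tsize (topen k s u)) /\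
  (forall A k s, fopen_at k s A = A \/ tsize s <= fsize (fopen_at k s A)).
Proof.
  apply term_form_ind; intros; simpl.
  - now left.
  - destruct (Nat.eqb n k); [right|left]; auto.
  - destruct (map_topen_size k s args H) as [E|E]; [left; congruence|right; lia].
  - destruct (H (S k) s) as [E|E]; [left; congruence|right; lia].
  - destruct (H (S k) s) as [E|E]; [left; congruence|right; lia].
  - destruct (map_topen_size k s args H) as [E|E]; [left; congruence|right; lia].
  - now left.
  - destruct (H k s), (H0 k s); try (right; lia); left; congruence.
  - destruct (H k s), (H0 k s); try (right; lia); left; congruence.
  - destruct (H k s), (H0 k s); try (right; lia); left; congruence.
Qed.

Lemma topen_neq e k u : tsize u < tsize e -> u <> BVar k -> topen k e u <> e.
Proof.
  intros Hlt Hk Heq.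
  destruct u as [x|n|f args|A|A]; simpl in Heq.
  - subst e; simpl in Hlt; lia.
  - destruct (Nat.eqb_spec n k); [congruence|subst e; simpl in Hlt; lia].
  - destruct (map_topen_size k e args) as [E|E].
    + apply Forall_forall; intros; apply open_size.
    + rewrite E in Heq; subst e; lia.
    + apply (f_equal tsize) in Heq; simpl in Heq; lia.
  - destruct (proj2 open_size A (S k) e) as [E|E].
    + rewrite E in Heq; subst e; lia.
    + apply (f_equal tsize) in Heq; simpl in Heq; lia.
  - destruct (proj2 open_size A (S k) e) as [E|E].
    + rewrite E in Heq; subst e; lia.
    + apply (f_equal tsize) in Heq; simpl in Heq; lia.
Qed.

Lemma replace_id (e : term) :
  (forall u, replT e e u = u) /\ (forall A, replF e e A = A).
Proof.
  apply term_form_ind; intros; simpl;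
    try (destruct (excluded_middle_informative _) as [->|]; [reflexivity|]);
    f_equal; auto; rewrite <- (map_id args) at 2; apply map_ext_in, Forall_forall, H.
Qed.

Lemma replT_self s e : replT s e e = s.
Proof. destruct e; simpl; destruct (excluded_middle_informative _); congruence. Qed.

Lemma map_replT_topen e t k args :
  Forall (fun u => forall k, tsize u < tsize e -> replT t e (topen k e u) = topen k t u) args ->
  list_sum (map tsize args) < tsize e ->
  map (replT t e) (map (topen k e) args) = map (topen k t) args.
Proof.
  intros IH Hlt. rewrite map_map. apply map_ext_in. intros a Ha.
  apply (proj1 (Forall_forall _ _) IH a Ha).
  pose proof (tsize_le_args a args Ha); lia.
Qed.

(* Since u is smaller than e, e does not occur in u, and by [topen_neq] opening u
   with e creates no occurrence of e other than the inserted ones. *)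
Lemma replace_opened e t :
  (forall u k, tsize u < tsize e -> replT t e (topen k e u) = topen k t u) /\
  (forall A k, fsize A < tsize e -> replF t e (fopen_at k e A) = fopen_at k t A).
Proof.
  apply term_form_ind; intros; simpl in *; try (rewrite H, H0 by lia; reflexivity).
  - destruct (excluded_middle_informative _); [subst e; simpl in H; lia|reflexivity].
  - destruct (Nat.eqb_spec n k) as [->|Hn]; [apply replT_self|].
    simpl; destruct (excluded_middle_informative _); [subst e; simpl in H; lia|reflexivity].
  - pose proof (topen_neq e k (Fn f args) H0 ltac:(discriminate)) as Hne; simpl in Hne.
    destruct (excluded_middle_informative _); [contradiction|].
    f_equal; apply map_replT_topen; auto; lia.
  - pose proof (topen_neq e k (Eps A) H0 ltac:(discriminate)) as Hne; simpl in Hne.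
    destruct (excluded_middle_informative _); [contradiction|].
    f_equal; apply H; lia.
  - pose proof (topen_neq e k (Tau A) H0 ltac:(discriminate)) as Hne; simpl in Hne.
    destruct (excluded_middle_informative _); [contradiction|].
    f_equal; apply H; lia.
  - f_equal; apply map_replT_topen; auto; lia.
  - reflexivity.
Qed.

Lemma replF_fopen e t A : fsize A < tsize e -> replF t e (fopen A e) = fopen A t.
Proof. apply replace_opened. Qed.

Lemma args_lc_at_Forall k args :
  fold_right (fun a P => term_lc_at k a /\ P) True args <-> Forall (term_lc_at k) args.
Proof.
  induction args as [|a args IH]; simpl; split; intros H; auto.
  - destruct H; constructor; tauto.
  - inversion H; subst; tauto.
Qed.

Lemma args_lc_at_map (f : term -> term) k k' args :
  Forall (fun a => term_lc_at k a -> term_lc_at k' (f a)) args ->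
  fold_right (fun a P => term_lc_at k a /\ P) True args ->
  fold_right (fun a P => term_lc_at k' a /\ P) True (map f args).
Proof.
  rewrite !args_lc_at_Forall, Forall_map. intros Hf Ha.
  eapply Forall_impl; [|exact (Forall_and Hf Ha)]. intros a [Hfa Haa]; auto.
Qed.

Lemma lc_at_mono :
  (forall u k, term_lc_at k u -> forall k', k <= k' -> term_lc_at k' u) /\
  (forall A k, form_lc_at k A -> forall k', k <= k' -> form_lc_at k' A).
Proof.
  apply term_form_ind; intros; simpl in *; try lia; try (apply (H (S k)); auto; lia);
    intuition eauto.
  all: rewrite <- (map_id args); apply (args_lc_at_map _ k); auto;
    eapply Forall_impl; [|exact H]; eauto.
Qed.

Lemma term_lc_at_closed s k : term_lc s -> term_lc_at k s.
Proof. intros Hs; apply (proj1 lc_at_mono s 0 Hs); lia. Qed.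

Lemma replace_lc_at s e : term_lc s ->
  (forall u k, term_lc_at k u -> term_lc_at k (replT s e u)) /\
  (forall A k, form_lc_at k A -> form_lc_at k (replF s e A)).
Proof.
  intros Hs; apply term_form_ind; intros; simpl in *;
    try (destruct (excluded_middle_informative _); [now apply term_lc_at_closed|]);
    simpl; intuition auto.
  all: apply (args_lc_at_map _ k); auto; eapply Forall_impl; [|exact H]; eauto.
Qed.

Lemma open_lc_at t : term_lc t ->
  (forall u k, term_lc_at (S k) u -> term_lc_at k (topen k t u)) /\
  (forall A k, form_lc_at (S k) A -> form_lc_at k (fopen_at k t A)).
Proof.
  intros Ht; apply term_form_ind; intros; simpl in *; intuition eauto.
  all: try (apply (args_lc_at_map _ (S k)); auto; eapply Forall_impl; [|exact H]; eauto).
  destruct (Nat.eqb_spec n k); [now apply term_lc_at_closed|simpl; lia].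
Qed.

Definition crit_arg (c : crit) : term :=
  match c with CritEps _ t | CritTau _ t => t end.

Lemma crit_wf_lc c :
  crit_wf c -> term_lc (crit_term c) /\ term_lc (crit_arg c) /\ form_lc (critf c).
Proof.
  destruct c as [A t|A t]; simpl; intros [HA Ht]; unfold fopen;
    repeat split; auto; apply open_lc_at; auto.
Qed.

Lemma Deriv_lc L Hyp A : (forall h, Hyp h -> form_lc h) -> Deriv L Hyp A -> form_lc A.
Proof.
  intros Hh; induction 1 as [| |A B _ _ _ IHB]; [auto|auto|apply IHB].
Qed.

Fixpoint feval (w : form -> bool) (A : form) : bool :=
  match A with
  | Atom p args => w (Atom p args)
  | Bot => false
  | Imp A B => implb (feval w A) (feval w B)
  | And A B => feval w A && feval w B
  | Or A B => feval w A || feval w B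
  end.

Definition entails (Hyp : form -> Prop) (A : form) : Prop :=
  forall w, (forall h, Hyp h -> feval w h = true) -> feval w A = true.

Lemma feval_psubst w sg P : feval w (psubst sg P) = peval (fun n => feval w (sg n)) P.
Proof. induction P; simpl; congruence. Qed.

Lemma Deriv_C_sound Hyp A : Deriv C_logic Hyp A -> entails Hyp A.
Proof.
  intros HA w Hw; induction HA as [A HA|P sg HP _|A B _ IHA _ IHAB]; auto.
  - rewrite feval_psubst; apply HP.
  - simpl in IHAB; rewrite IHA in IHAB; exact IHAB.
Qed.

Lemma feval_replF w s e A : feval w (replF s e A) = feval (fun a => w (replF s e a)) A.
Proof. induction A; simpl; congruence. Qed.

Fixpoint atoms (A : form) : list form :=
  match A with
  | Atom p args => [Atom p args]
  | Bot => []
  | Imp A B | And A B | Or A B => atoms A ++ atoms B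
  end.

Fixpoint atom_index (a : form) (l : list form) : nat :=
  match l with
  | [] => 0
  | b :: l' => if excluded_middle_informative (a = b) then 0 else S (atom_index a l')
  end.

Lemma nth_atom_index a l : In a l -> nth (atom_index a l) l Bot = a.
Proof.
  induction l as [|b l IH]; simpl; [tauto|].
  intros [<-|Ha]; destruct (excluded_middle_informative _); auto; congruence.
Qed.

Fixpoint abstract (l : list form) (A : form) : pform :=
  match A with
  | Atom p args => PVar (atom_index (Atom p args) l)
  | Bot => PBot
  | Imp A B => PImp (abstract l A) (abstract l B)
  | And A B => PAnd (abstract l A) (abstract l B)
  | Or A B => POr (abstract l A) (abstract l B)
  end.

Lemma psubst_abstract l A :
  incl (atoms A) l -> psubst (fun n => nth n l Bot) (abstract l A) = A.
Proof.
  induction A; simpl; intros Hl;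
    try (apply incl_app_inv in Hl as [Hl1 Hl2]; f_equal; auto).
  - apply nth_atom_index, Hl; now left.
  - reflexivity.
Qed.

Lemma peval_abstract v l A : peval v (abstract l A) = feval (fun a => v (atom_index a l)) A.
Proof. induction A; simpl; congruence. Qed.

Lemma feval_Imps w hs A :
  ((forall h, In h hs -> feval w h = true) -> feval w A = true) ->
  feval w (fold_right Imp A hs) = true.
Proof.
  induction hs as [|h hs IH]; simpl; intros HA.
  - apply HA; contradiction.
  - destruct (feval w h) eqn:Eh; [|reflexivity].
    apply IH; intros Hhs; apply HA; intros h' [<-|Hh']; auto.
Qed.

Lemma form_lc_Imps hs A : Forall form_lc hs -> form_lc A -> form_lc (fold_right Imp A hs).
Proof. intros Hhs HA; induction Hhs; [exact HA|split; assumption]. Qed.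

Lemma Deriv_Imps_mp L Hyp hs A : Deriv L Hyp (fold_right Imp A hs) ->
  (forall h, In h hs -> Deriv L Hyp h) -> Deriv L Hyp A.
Proof.
  induction hs as [|h hs IH]; simpl; intros HA Hhs; auto.
  apply IH.
  - apply (d_mp _ _ h); [apply Hhs; now left|exact HA].
  - intros h' Hh'; apply Hhs; now right.
Qed.

(* One substitution instance of the tautology h1 -> ... -> hn -> A, with equal atoms
   abstracted to equal variables, followed by modus ponens. *)
Lemma Deriv_C_complete_list Hyp hs A :
  (forall h, In h hs -> Hyp h /\ form_lc h) -> form_lc A ->
  entails (fun h => In h hs) A -> Deriv C_logic Hyp A.
Proof.
  intros Hhs HA Hent.
  apply (Deriv_Imps_mp _ _ hs); [|intros h Hh; apply d_hyp, Hhs, Hh].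
  set (Phi := fold_right Imp A hs).
  assert (HPhi : form_lc Phi).
  { apply form_lc_Imps; auto. apply Forall_forall; intros h Hh; apply Hhs, Hh. }
  rewrite <- (psubst_abstract (atoms Phi) Phi (incl_refl _)) in HPhi |- *.
  apply d_ax; auto.
  intros v; rewrite peval_abstract; apply feval_Imps, Hent.
Qed.

Lemma Deriv_C_complete Hyp hs A :
  (forall h, Hyp h -> In h hs /\ form_lc h) -> form_lc A ->
  entails Hyp A -> Deriv C_logic Hyp A.
Proof.
  intros Hhs HA Hent.
  set (in_Hyp h := if excluded_middle_informative (Hyp h) then true else false).
  apply (Deriv_C_complete_list _ (filter in_Hyp hs)); auto.
  - intros h Hh; apply filter_In in Hh as [_ Hh]; unfold in_Hyp in Hh.
    destruct (excluded_middle_informative (Hyp h)) as [H|]; [|discriminate].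
    split; [exact H|apply Hhs, H].
  - intros w Hw; apply Hent; intros h Hh; apply Hw, filter_In.
    split; [apply Hhs, Hh|unfold in_Hyp; now destruct (excluded_middle_informative _)].
Qed.

Lemma critf_replace_by_arg w c0 c :
  crit_term c = crit_term c0 -> feval w (critf c0) = false ->
  feval w (replF (crit_arg c0) (crit_term c0) (critf c)) = true.
Proof.
  destruct c0 as [A t|A t], c as [A' t'|A' t']; simpl; intros He Hc0;
    try discriminate; injection He as ->; apply implb_false_iff in Hc0 as [HAt HAe];
    rewrite replF_fopen by (simpl; lia); rewrite ?HAt, ?HAe; auto using implb_true_r.
Qed.

(* The assumptions Gamma[s/e] (s in ss) and Lambda'(e) of [elim_set]. *)
Definition elim_hyps (Delta : list crit) (e : term) (Lam : form -> Prop) (ss : list term)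
    (phi : form) : Prop :=
  (exists s c, In s ss /\ In c Delta /\ crit_term c <> e /\ phi = replF s e (critf c))
  \/ (exists c, In c Delta /\ crit_term c = e /\ ~ Lam (critf c) /\ phi = critf c).

Lemma elim_hyps_finite Delta e Lam ss :
  (forall c, In c Delta -> crit_wf c) -> Forall term_lc ss ->
  forall h, elim_hyps Delta e Lam ss h ->
    In h (flat_map (fun c => critf c :: map (fun s => replF s e (critf c)) ss) Delta) /\
    form_lc h.
Proof.
  intros Hwf Hss h [(s & c & Hs & Hc & _ & ->)|(c & Hc & _ & _ & ->)];
    pose proof (crit_wf_lc c (Hwf c Hc)) as (_ & _ & Hlc).
  - split; [apply in_flat_map; exists c; split; [exact Hc|]|].
    + right; apply in_map_iff; now exists s.
    + apply replace_lc_at; [apply (proj1 (Forall_forall _ _) Hss s Hs)|exact Hlc].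
  - split; [apply in_flat_map; exists c; split; [exact Hc|now left]|exact Hlc].
Qed.

Lemma entails_elim_pair Delta D c0 :
  entails (fun phi => exists c, In c Delta /\ phi = critf c) D ->
  entails (elim_hyps Delta (crit_term c0) (fun phi => phi = critf c0)
             [crit_term c0; crit_arg c0])
          (Or (replF (crit_term c0) (crit_term c0) D) (replF (crit_arg c0) (crit_term c0) D)).
Proof.
  intros HD w Hw; simpl.
  set (e := crit_term c0) in *; set (t0 := crit_arg c0) in *.
  rewrite (proj2 (replace_id e)).
  destruct (feval w (critf c0)) eqn:Hc0.
  - rewrite HD; [reflexivity|].
    intros h (c & Hc & ->).
    destruct (excluded_middle_informative (crit_term c = e)) as [Hce|Hce].
    + destruct (excluded_middle_informative (critf c = critf c0)) as [E|E].
      * now rewrite E.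
      * apply Hw; right; now exists c.
    + rewrite <- (proj2 (replace_id e) (critf c)).
      apply Hw; left; exists e, c; simpl; auto.
  - rewrite (feval_replF w t0), (HD (fun a => w (replF t0 e a))); [apply orb_true_r|].
    intros h (c & Hc & ->); rewrite <- feval_replF.
    destruct (excluded_middle_informative (crit_term c = e)) as [Hce|Hce].
    + now apply critf_replace_by_arg.
    + apply Hw; left; exists t0, c; simpl; auto.
Qed.

Theorem mainTheorem13 (Delta : list crit) (D : form) (C0 : crit) :
  etDeriv C_logic Delta D -> In C0 Delta ->
  exists ss : list term,
    elim_set C_logic Delta D (crit_term C0) (fun phi => phi = critf C0) ss.
Proof.
  intros [Hwf HD] HC0.
  destruct (crit_wf_lc C0 (Hwf C0 HC0)) as (He & Ht0 & _).
  assert (Hss : Forall term_lc [crit_term C0; crit_arg C0]) by (repeat constructor; assumption).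
  assert (HDlc : form_lc D).
  { revert HD; apply Deriv_lc. intros h (c & Hc & ->). apply (crit_wf_lc c (Hwf c Hc)). }
  exists [crit_term C0; crit_arg C0].
  split; [discriminate|]; split; [exact Hss|]; cbn [big_or map].
  apply (Deriv_C_complete _ _ _
           (elim_hyps_finite Delta (crit_term C0) (fun phi => phi = critf C0) _ Hwf Hss)).
  - split; apply replace_lc_at; assumption.
  - apply entails_elim_pair, Deriv_C_sound, HD.
Qed.
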